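(* Let $S=(0,1)$. Let $\{\lambda_n\}_{n\geq 1}$ be i.i.d. random variables, each uniformly distributed on $(3.87,4)$, and let $X_0$ be an $S$-valued random variable independent of the $\lambda_n$'s. Define the Markov process $X_{n+1}=\lambda_{n+1}X_n(1-X_n)$ for $n\geq 0$, with one-step transition probability $p(x,A)=\mathrm{Prob}(X_1\in A\mid X_0=x)=\mathrm{Prob}(\lambda_1 x(1-x)\in A)$. Let $\lambda_{\min}=3.87$, let $A_0=\left(1-\frac{1}{\lambda_{\min}},\,1-\frac14\right)$, and let $\phi$ be normalized Lebesgue measure on $A_0$, i.e. $\phi(A)=\frac{1}{|A_0|}\,\mathrm{Leb}(A\cap A_0)$ for measurable $A$, where $|A_0|$ is the length of $A_0$. Then there exists $c>0$ such that for all $x\in A_0$ and all measurable $A\subset(0,1)$, $p(x,A)\geq c\,\phi(A)$.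
   Context: $A_0$ is the set of fixed points $1-1/\lambda$ of the deterministic logistic maps $x\mapsto \lambda x(1-x)$ for $\lambda\in(3.87,4)$. *)

From HB Require Import structures.
From mathcomp Require Import all_boot all_order all_algebra.
From mathcomp Require Import all_classical all_reals all_analysis.
Set Implicit Arguments. Unset Strict Implicit. Unset Printing Implicit Defensive.
Import Order.TTheory GRing.Theory Num.Theory.
Import numFieldNormedType.Exports.
Local Open Scope classical_set_scope.
Local Open Scope ring_scope.

Section defs.
Variable R : realType.

Definition lmin : R := 387%:R / 100%:R.
Definition lmax : R := 4%:R.

Lemma lmin_lt_lmax : lmin < lmax.
Proof.
rewrite /lmin /lmax ltr_pdivrMr ?ltr0n // -natrM ltr_nat //.
Qed.

Definition A0 : set R := `](1 - lmin^-1), (1 - 4%:R^-1)[.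

Definition phi (A : set R) : \bar R :=
  (lebesgue_measure (A `&` A0) * ((1 - 4%:R^-1) - (1 - lmin^-1))^-1%:E)%E.

(** one-step transition probability p(x,A) = Prob(lambda_1 x(1-x) \in A),
    where lam : T -> R is the random variable lambda_1 on the probability
    space (T, P). *)
Definition trans_prob d (T : measurableType d) (P : probability T R)
  (lam : T -> R) (x : R) (A : set R) : \bar R :=
  P [set t | A (lam t * (x * (1 - x)))].

End defs.

From HB Require Import structures.
From mathcomp Require Import all_boot all_order all_algebra.
From mathcomp Require Import all_classical all_reals all_analysis.
From mathcomp Require Import lra.
Set Implicit Arguments.
Unset Strict Implicit.
Unset Printing Implicit Defensive.
Import Order.TTheory GRing.Theory Num.Theory.
Import numFieldNormedType.Exports.
Local Open Scope classical_set_scope.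
Local Open Scope ring_scope.

(* The endpoints u = 1 - 1/lmin and v = 1 - 1/4 of A0 are the fixed points of
   the logistic maps with parameters lmin and 4, so u (1 - u) = u / lmin and
   v (1 - v) = v / 4.  For x in A0, x (1 - x) lies strictly between these two
   values, hence lambda x (1 - x) can only fall in A0 when lmin < lambda < 4.
   On that range lambda x (1 - x) is uniform with density
   1 / ((4 - lmin) x (1 - x)) >= 1 / (4 - lmin), which gives the constant
   c = |A0| / (4 - lmin). *)

Lemma lebesgue_measure_scale (R : realType) (y : R) (A : set R) :
  0 < y -> measurable A ->
  lebesgue_measure A =
    (y%:E * lebesgue_measure ((fun t : R => (t * y)%R) @^-1` A))%E.
Proof.
move=> y0 mA.
have mf : measurable_fun [set: measurableTypeR R]
    ((fun t : R => t * y) : measurableTypeR R -> measurableTypeR R).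
  exact: measurable_realfun.mulrr_measurable.
apply: (@lebesgue_measure_unique R (mscale (NngNum (ltW y0))
  (pushforward lebesgue_measure
    (fun t : measurableTypeR R => t * y : measurableTypeR R)))) => //.
move=> _ [[a b]] _ <- /=; rewrite /mscale /=; rewrite /pushforward.
rewrite (_ : _ @^-1` _ = `]a / y, b / y]%classic); last first.
  by apply/seteqP; split => t /=; rewrite !in_itv /= ltr_pdivrMr // ler_pdivlMr.
rewrite !lebesgue_measure_itv /= !lte_fin ltr_pM2r ?invr_gt0 //.
case: ifPn => ab; last by rewrite mule0.
by rewrite -!EFinD -EFinM -mulrBl mulrCA divff ?gt_eqF // mulr1.
Qed.

Lemma uniform_prob_sub_itv (R : realType) (a b : R) (ab : a < b) (B : set R) :
  measurable B -> B `<=` `[a, b] ->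
  uniform_prob ab B = ((b - a)^-1%:E * lebesgue_measure B)%E.
Proof.
move=> mB Bab; rewrite /uniform_prob -integral_cst //.
apply: eq_integral => t /[!inE] /Bab; rewrite /= in_itv /=.
by rewrite /uniform_pdf => ->.
Qed.

Lemma logistic_fixed_point_scale_bound (R : realFieldType) (a b t x : R) :
  2 <= a -> a < b ->
  1 - a^-1 < x < 1 - b^-1 ->
  1 - a^-1 < t * (x * (1 - x)) < 1 - b^-1 -> a < t < b.
Proof.
move=> a2 ab /andP[ux xv] /andP[uy yv].
have a0 : 0 < a by lra.
have b0 : 0 < b by lra.
set u := a^-1 in ux uy *; set v := b^-1 in xv yv *.
have au : a * u = 1 by rewrite mulfV ?gt_eqF.
have bv : b * v = 1 by rewrite mulfV ?gt_eqF.
have u0 : 0 < u by rewrite invr_gt0.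
have v0 : 0 < v by rewrite invr_gt0.
have u_le : 2 * u <= 1 by nra.
have v_lt : v < u by nra.
have y0 : 0 < x * (1 - x) by nra.
have t0 : 0 < t by nra.
have y_lt : x * (1 - x) < (1 - u) * u by nra.
have y_gt : v * (1 - v) < x * (1 - x) by nra.
apply/andP; split; nra.
Qed.

Section uniform_multiplier.
Variables (R : realType) (d : measure_display) (T : measurableType d).
Variables (P : probability T R) (lam : T -> R) (a b : R) (ab : a < b).
Hypothesis mlam : measurable_fun setT lam.
Hypothesis lam_unif : forall B : set R, measurable B ->
  P (lam @^-1` B) = uniform_prob ab B.

Lemma measurable_mulr_event (y : R) (B : set R) :
  measurable B -> measurable [set t | B (lam t * y)].
Proof.
move=> mB; change (measurable (lam @^-1` ((fun s => s * y) @^-1` B))).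
rewrite -[X in measurable X]setTI; apply: mlam => //.
by rewrite -[X in measurable X]setTI; exact: measurable_realfun.mulrr_measurable.
Qed.

Lemma prob_mulr_uniform (y : R) (B : set R) :
  measurable B -> (fun t => t * y) @^-1` B `<=` `[a, b] ->
  P [set t | B (lam t * y)] =
    ((b - a)^-1%:E * lebesgue_measure ((fun t => (t * y)%R) @^-1` B))%E.
Proof.
move=> mB Bab.
have mfB : measurable ((fun t => t * y) @^-1` B).
  by rewrite -[X in measurable X]setTI; exact: measurable_realfun.mulrr_measurable.
by rewrite -uniform_prob_sub_itv // -lam_unif.
Qed.

Lemma prob_mulr_uniform_ge (y : R) (B : set R) :
  0 < y <= 1 -> measurable B -> (fun t => t * y) @^-1` B `<=` `[a, b] ->
  ((b - a)^-1%:E * lebesgue_measure B <= P [set t | B (lam t * y)%R])%E.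
Proof.
move=> /andP[y0 y1] mB Bab; rewrite prob_mulr_uniform //.
apply: lee_wpmul2l; first by rewrite lee_fin invr_ge0 subr_ge0 ltW.
rewrite (lebesgue_measure_scale y0 mB) -[X in (_ <= X)%E]mul1e.
by apply: lee_wpmul2r => //; rewrite lee_fin.
Qed.

End uniform_multiplier.

Theorem mainTheorem2 (R : realType) (d : measure_display) (T : measurableType d)
  (P : probability T R) (lam : T -> R)
  (mlam : measurable_fun setT lam)
  (lam_unif : forall B : set R, measurable B ->
     P (lam @^-1` B) = uniform_prob (@lmin_lt_lmax R) B) :
  exists c : R, 0 < c /\
    forall x : R, A0 x ->
    forall A : set R, measurable A -> A `<=` `]0, 1[ ->
      (c%:E * phi A <= trans_prob P lam x A)%E.
Proof.
have lmin2 : 2 <= lmin R by rewrite /lmin ler_pdivlMr ?ltr0n // -natrM ler_nat.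
have lminmax := @lmin_lt_lmax R.
set L : R := (1 - 4%:R^-1) - (1 - (lmin R)^-1).
have L0 : 0 < L.
  have lmin0 : 0 < lmin R by lra.
  have : 4%:R^-1 < (lmin R)^-1 by rewrite ltf_pV2 ?posrE.
  by rewrite /L; lra.
exists (L / (lmax R - lmin R)); split=> [|x Ax A mA _].
  by rewrite divr_gt0 // subr_gt0.
set y := x * (1 - x); set B := A `&` @A0 R.
move: Ax; rewrite /A0 /= in_itv /= => Ax.
have [x0 x1] : 0 < x /\ x < 1.
  have : (lmin R)^-1 < 1 by rewrite invf_lt1; lra.
  have : 0 < 4%:R^-1 :> R by rewrite invr_gt0.
  by move: Ax => /andP[]; lra.
have y01 : 0 < y <= 1 by rewrite /y; apply/andP; split; nra.
have mB : measurable B by apply: measurableI => //; exact: measurable_itv.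
have Bab : (fun t => t * y) @^-1` B `<=` `[lmin R, lmax R].
  move=> t [_]; rewrite /= !in_itv /= => Aty.
  have /andP[? ?] := logistic_fixed_point_scale_bound lmin2 lminmax Ax Aty.
  by apply/andP; split; apply: ltW.
have -> : ((L / (lmax R - lmin R))%:E * phi A =
    (lmax R - lmin R)^-1%:E * lebesgue_measure B)%E.
  by rewrite /phi -/B -/L muleCA -EFinM mulrAC mulfV ?gt_eqF // mul1r muleC.
apply: le_trans (prob_mulr_uniform_ge lam_unif y01 mB Bab) _.
apply: le_measure; rewrite ?inE; try exact: (measurable_mulr_event mlam).
by move=> t [].
Qed.
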